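(* Let $A$ be a finite alphabet and let $H\in I(A^* )$ be defined by $H(u,v)=\binom{v}{u}\eta(u,v)$. Then for all $u,v\in A^*$ and every integer $\ell\ge 0$, $$H^\ell(u,v)=\ell!\,\binom{v}{u}\,[\,|v|=|u|+\ell\,],$$ where $H^\ell$ is the $\ell$-th power of $H$ under convolution (with $H^0=\delta$).
   Context: $A^*$ is the set of finite words over the finite alphabet $A$; $|w|$ is the length of $w$. For words $u=a_1\cdots a_k$ and $v=b_1\cdots b_n$, $\binom{v}{u}$ denotes the number of order-preserving injections $\varphi:[k]\to[n]$ with $a_i=b_{\varphi(i)}$ for all $i$ (the number of occurrences of $u$ as a scattered subword/subsequence of $v$). $A^*$ is partially ordered by $u\le v$ iff $\binom{v}{u}>0$. For a locally finite poset $Q$, the incidence algebra $I(Q)$ over $\mathbb{Q}$ consists of all functions $F$ on pairs $(x,y)$ with $x\le y$, with convolution $(FG)(x,y)=\sum_{x\le z\le y}F(x,z)G(z,y)$ and identity $\delta(x,y)=[x=y]$. Here $[\psi]$ is the Iverson bracket ($1$ if $\psi$ holds, $0$ otherwise), and $\eta(x,y)=[y\text{ covers }x]$; in $A^*$, $v$ covers $u$ iff $u\le v$ and $|v|=|u|+1$. *)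

From HB Require Import structures.
From mathcomp Require Import all_boot all_order all_algebra.
Set Implicit Arguments. Unset Strict Implicit. Unset Printing Implicit Defensive.
Import GRing.Theory.
Local Open Scope ring_scope.

Section Words.
Variable A : finType.

(* binom v u : number of order-preserving injections phi : [|u|] -> [|v|]
   with u_i = v_(phi i), i.e. occurrences of u as a scattered subword of v. *)
Definition binom (v u : seq A) : nat :=
  #|[set f : {ffun 'I_(size u) -> 'I_(size v)} |
      [forall i : 'I_(size u), forall j : 'I_(size u), (i < j)%N ==> (f i < f j)%N]
      && [forall i : 'I_(size u), tnth (in_tuple u) i == tnth (in_tuple v) (f i)]]|.

Definition subw (u v : seq A) : bool := (0 < binom v u)%N.

(* incidence functions (values on non-comparable pairs are irrelevant) *)
Definition incfun := seq A -> seq A -> rat.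

(* convolution: sum over the interval [u, v] = {z | u <= z <= v};
   every such z has length <= |v|, so we enumerate words by length. *)
Definition conv (F G : incfun) : incfun := fun u v =>
  \sum_(k < (size v).+1) \sum_(t : k.-tuple A | subw u t && subw t v)
     F u (tval t) * G (tval t) v.

Definition delta : incfun := fun u v => (u == v)%:R.

Definition eta : incfun := fun u v => (subw u v && (size v == (size u).+1))%:R.

Definition incpow (F : incfun) (l : nat) : incfun := iter l (conv F) delta.

Definition Hfun : incfun := fun u v => (binom v u)%:R * eta u v.

End Words.

From Pilot Require Import Defs.
From HB Require Import structures.
From mathcomp Require Import all_boot all_order all_algebra.
From mathcomp Require Import zify ring.
Set Implicit Arguments. Unset Strict Implicit. Unset Printing Implicit Defensive.

(* Splitting the occurrences of u in b :: v according to whether they use the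
   first letter gives the Pascal recursion
   binom (b :: v) u = binom v u + [u = a :: u'] [a = b] binom v u'.
   From it one gets by induction on v the chain count
   sum_(|t| = |u| + 1) binom t u * binom v t = (|v| - |u|) * binom v u:
   an occurrence of u in v extends to an occurrence of some t of one more
   letter in exactly |v| - |u| ways.  In H^(l+1) = H * H^l only the middle
   words t with |t| = |u| + 1 contribute, so the chain count turns
   l! binom v u into (l+1)! binom v u. *)

Section SubwordRecursion.
Variable A : finType.
Implicit Types (a b : A) (u v : seq A).

Definition embeddings v u : {set {ffun 'I_(size u) -> 'I_(size v)}} :=
  [set f : {ffun 'I_(size u) -> 'I_(size v)} |
     [forall i : 'I_(size u), forall j : 'I_(size u), (i < j)%N ==> (f i < f j)%N]
  && [forall i : 'I_(size u), tnth (in_tuple u) i == tnth (in_tuple v) (f i)]].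

Lemma binomE v u : binom v u = #|embeddings v u|.
Proof. by []. Qed.

Lemma embeddings_mono v u f (i j : 'I_(size u)) :
  f \in embeddings v u -> (i < j)%N -> (f i < f j)%N.
Proof. by rewrite inE => /andP[/forallP/(_ i)/forallP/(_ j)/implyP]. Qed.

Lemma embeddings_nth a v u f (i : 'I_(size u)) :
  f \in embeddings v u -> nth a u i = nth a v (f i).
Proof. by rewrite inE => /andP[_ /forallP/(_ i)/eqP]; rewrite !(tnth_nth a). Qed.

Lemma forall_ord_recl n (p : pred 'I_n.+1) :
  [forall i, p i] = p ord0 && [forall j : 'I_n, p (lift ord0 j)].
Proof.
apply/forallP/andP=> [p_all | [p0 /forallP p_lift] i].
  by split=> //; apply/forallP.
by case: (unliftP ord0 i) => [j ->|->].
Qed.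

Definition avoid0 m n : {set {ffun 'I_m -> 'I_n.+1}} :=
  [set f : {ffun 'I_m -> 'I_n.+1} | [forall i, f i != ord0]].

Definition liftf b v u (g : {ffun 'I_(size u) -> 'I_(size v)}) :
  {ffun 'I_(size u) -> 'I_(size (b :: v))} := [ffun i => lift ord0 (g i)].

Definition consf a b v u (g : {ffun 'I_(size u) -> 'I_(size v)}) :
  {ffun 'I_(size (a :: u)) -> 'I_(size (b :: v))} :=
  [ffun i => oapp (fun j => lift ord0 (g j)) ord0 (unlift ord0 i)].

Lemma consf0 a b v u g : @consf a b v u g ord0 = ord0.
Proof. by rewrite ffunE unlift_none. Qed.

Lemma consf_lift a b v u g j : @consf a b v u g (lift ord0 j) = lift ord0 (g j).
Proof. by rewrite ffunE liftK. Qed.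

Lemma liftf_inj b v u : injective (@liftf b v u).
Proof.
move=> g1 g2 /ffunP eq_g; apply/ffunP=> i.
by move: (eq_g i); rewrite !ffunE => /lift_inj.
Qed.

Lemma consf_inj a b v u : injective (@consf a b v u).
Proof.
move=> g1 g2 /ffunP eq_g; apply/ffunP=> i.
by move: (eq_g (lift ord0 i)); rewrite !consf_lift => /lift_inj.
Qed.

Lemma liftf_embeddings b v u g :
  (liftf b g \in embeddings (b :: v) u) = (g \in embeddings v u).
Proof.
rewrite !inE; congr andb; first by do 2!apply: eq_forallb => ?; rewrite !ffunE.
by apply: eq_forallb => i; rewrite ffunE !(tnth_nth b).
Qed.

Lemma consf_embeddings a v u g :
  (consf a a g \in embeddings (a :: v) (a :: u)) = (g \in embeddings v u).
Proof.
rewrite !inE !forall_ord_recl consf0 ltnn /= (tnth_nth a) /= eqxx andTb.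
have -> : [forall j, 0 < consf a a g (lift ord0 j)].
  by apply/forallP=> j; rewrite consf_lift.
congr andb; apply: eq_forallb => i.
  rewrite forall_ord_recl ltn0 /=; apply: eq_forallb => j.
  by rewrite !consf_lift.
by rewrite consf_lift !(tnth_nth a).
Qed.

Lemma card_embeddings_avoid0 b v u :
  #|embeddings (b :: v) u :&: avoid0 _ _| = binom v u.
Proof.
rewrite binomE -(card_imset _ (@liftf_inj b v u)); apply: eq_card => f.
rewrite in_setI; apply/andP/imsetP=> [[emb_f] | [g emb_g ->]].
  rewrite inE => /forallP f_ne0.
  have f_lift i : ord0 != f i by rewrite eq_sym f_ne0.
  pose g : {ffun 'I_(size u) -> 'I_(size v)} :=
    [ffun i => s2val (unlift_some (f_lift i))].
  have liftf_g : liftf b g = f.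
    by apply/ffunP=> i; rewrite !ffunE; case: unlift_some.
  by exists g; rewrite // -(liftf_embeddings b) liftf_g.
split; first by rewrite liftf_embeddings.
by rewrite inE; apply/forallP=> i; rewrite ffunE eq_sym neq_lift.
Qed.

Lemma embeddings_lift_neq0 a b v u f j : f \in embeddings (b :: v) (a :: u) ->
  f (lift ord0 j) != ord0.
Proof.
move=> emb_f; rewrite -lt0n.
exact: leq_ltn_trans (embeddings_mono emb_f (isT : (ord0 < lift ord0 j)%N)).
Qed.

Lemma embeddings_avoid0 a b v u f : f \in embeddings (b :: v) (a :: u) ->
  (f \in avoid0 _ _) = (f ord0 != ord0).
Proof.
move=> emb_f; rewrite inE forall_ord_recl; apply: andb_idr => _.
by apply/forallP=> j; apply: embeddings_lift_neq0 emb_f.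
Qed.

Lemma card_embeddings_hit0 a b v u :
  #|embeddings (b :: v) (a :: u) :\: avoid0 _ _| = ((a == b) * binom v u)%N.
Proof.
have hit0E f : (f \in embeddings (b :: v) (a :: u) :\: avoid0 _ _)
             = (f \in embeddings (b :: v) (a :: u)) && (f ord0 == ord0).
  rewrite in_setD andbC.
  by case emb_f: (f \in _); rewrite // embeddings_avoid0 ?negbK.
have [eq_ab | neq_ab] := eqVneq a b; last first.
  apply/eqP; rewrite cards_eq0; apply/eqP/setP=> f; rewrite hit0E in_set0.
  apply/negbTE/andP=> -[emb_f /eqP f0].
  have := @embeddings_nth a (b :: v) (a :: u) f ord0 emb_f; rewrite f0 /= => a_eq_b.
  by rewrite a_eq_b eqxx in neq_ab.
subst b; rewrite mul1n binomE -(card_imset _ (@consf_inj a a v u)).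
apply: eq_card => f.
rewrite hit0E; apply/andP/imsetP=> [[emb_f /eqP f0] | [g emb_g ->]].
  have f_lift j : ord0 != f (lift ord0 j).
    by rewrite eq_sym (embeddings_lift_neq0 _ emb_f).
  pose g : {ffun 'I_(size u) -> 'I_(size v)} :=
    [ffun j => s2val (unlift_some (f_lift j))].
  have consf_g : consf a a g = f.
    apply/ffunP=> i; case: (unliftP ord0 i) => [j -> | ->]; last by rewrite consf0.
    by rewrite consf_lift ffunE; case: unlift_some.
  by exists g; rewrite // -(consf_embeddings a) consf_g.
by rewrite consf_embeddings consf0.
Qed.

Lemma binom_cons b v u : binom (b :: v) u =
  (binom v u + if u is a :: u' then (a == b) * binom v u' else 0)%N.
Proof.
rewrite [LHS]binomE -(cardsID (avoid0 _ _)) card_embeddings_avoid0; congr addn.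
case: u => [|a u]; last exact: card_embeddings_hit0.
apply/eqP; rewrite cards_eq0 setD_eq0; apply/subsetP=> f _.
by rewrite inE; apply/forallP=> -[].
Qed.

Lemma binoms0 v : binom v [::] = 1%N.
Proof.
rewrite binomE.
have -> : embeddings v [::] = setT.
  by apply/setP=> f; rewrite !inE; apply/andP; split; apply/forallP=> -[].
by rewrite cardsT card_ffun !card_ord.
Qed.

Lemma binom0s a u : binom [::] (a :: u) = 0%N.
Proof.
rewrite binomE; apply/eqP; rewrite -leqn0.
by apply: leq_trans (max_card _) _; rewrite card_ffun !card_ord exp0n.
Qed.

Lemma binom_small v u : (size v < size u)%N -> binom v u = 0%N.
Proof.
elim: v u => [|b v IHv] [|a u] //= lt_vu; first exact: binom0s.
by rewrite binom_cons !IHv ?muln0 // (ltn_trans _ lt_vu).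
Qed.

Lemma binom_eq_size t u : size t = size u -> binom t u = (t == u).
Proof.
elim: t u => [|b t IHt] [|a u] //= => [_|[eq_tu]]; first exact: binoms0.
by rewrite binom_cons binom_small ?eq_tu // IHt // eqseq_cons eq_sym mulnb.
Qed.

Lemma sum_tuple_cons k (F : seq A -> nat) :
  \sum_(t : k.+1.-tuple A) F t = \sum_(a : A) \sum_(t : k.-tuple A) F (a :: t).
Proof.
rewrite pair_big /= (reindex (fun p : A * k.-tuple A => cons_tuple p.1 p.2)) //=.
exists (fun t : k.+1.-tuple A => (thead t, behead_tuple t)).
  by move=> [a t] _ /=; congr pair; apply: val_inj.
by move=> [[|a s] //= sz_s] _; apply: val_inj.
Qed.

Lemma sum_tuple_eq k u (F : seq A -> nat) : size u = k ->
  \sum_(t : k.-tuple A) (tval t == u) * F t = F u.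
Proof.
move=> sz_u; rewrite (bigD1 (Tuple (introT eqP sz_u))) //= eqxx mul1n.
rewrite big1 ?addn0 // => t /eqP neq_t; rewrite mulnbl.
by case: eqP => // eq_t; case: neq_t; apply: val_inj.
Qed.

Lemma sum_binom_cons k b v u :
  \sum_(t : k.+1.-tuple A) binom t u * binom (b :: v) t
  = \sum_(t : k.+1.-tuple A) binom t u * binom v t
    + \sum_(s : k.-tuple A) binom (b :: s) u * binom v s.
Proof.
under eq_bigr => t _ do rewrite binom_cons mulnDr.
rewrite big_split /=; congr addn.
rewrite (@sum_tuple_cons k
  (fun t => binom t u * if t is c :: s then (c == b) * binom v s else 0)) /=.
rewrite (bigD1 b) //= [X in _ + X]big1 => [|c neq_cb].
  by rewrite addn0; apply: eq_bigr => s _; rewrite eqxx mul1n.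
by apply: big1 => s _; rewrite (negbTE neq_cb) mul0n muln0.
Qed.

(* The chain count (|v| - |u|) * binom v u, with |u| * binom v u moved to the
   left so that no truncated subtraction occurs. *)
Lemma sum_binom_cover u v :
  \sum_(t : (size u).+1.-tuple A) binom t u * binom v t + size u * binom v u
  = size v * binom v u.
Proof.
elim: v u => [|b v IHv] u.
  rewrite big1 => [|t _]; last by rewrite [binom _ t]binom_small ?size_tuple // muln0.
  by case: u => [|a u]; rewrite ?binom0s ?muln0.
have IHu := IHv u; rewrite sum_binom_cons.
under [X in _ + X + _]eq_bigr => s _
  do rewrite binom_cons mulnDl binom_eq_size ?size_tuple //.
rewrite big_split /= sum_tuple_eq //.
case: u IHu => [|a u] IHu; rewrite binom_cons /=.
  by rewrite [X in _ + (_ + X) + _]big1 // !binoms0 /= in IHu *; lia.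
under [X in _ + (_ + X) + _]eq_bigr => s _ do rewrite -mulnA.
rewrite -big_distrr /=.
move: IHu (IHv u) => /=; nia.
Qed.

End SubwordRecursion.

Import GRing.Theory.
Local Open Scope ring_scope.

Section Powers.
Variable A : finType.
Implicit Types (u v : seq A) (F G : incfun A).

Lemma binom_eq0 u v : ~~ subw u v -> binom v u = 0%N.
Proof. by rewrite /subw lt0n negbK => /eqP. Qed.

Lemma conv_unguarded F G u v :
  (forall t, ~~ subw u t -> F u t = 0) -> (forall t, ~~ subw t v -> G t v = 0) ->
  conv F G u v = \sum_(k < (size v).+1) \sum_(t : k.-tuple A) F u t * G t v.
Proof.
move=> F0 G0; apply: eq_bigr => k _; rewrite big_mkcond; apply: eq_bigr => t _ /=.
by case: ifPn => // /nandP[/F0 -> | /G0 ->]; rewrite ?mul0r ?mulr0.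
Qed.

Definition Hpow l : incfun A := fun u v =>
  (l`!)%:R * (binom v u)%:R * (size v == (size u + l)%N)%:R.

Lemma Hpow0 u v : Hpow 0 u v = delta u v.
Proof.
rewrite /Hpow /delta addn0 mul1r.
have [eq_sz | neq_sz] := eqVneq (size v) (size u).
  by rewrite binom_eq_size // mulr1 eq_sym.
by rewrite mulr0; case: eqP => // eq_uv; rewrite eq_uv eqxx in neq_sz.
Qed.

Lemma HfunE u t : @Hfun A u t = (binom t u)%:R * (size t == (size u).+1)%:R.
Proof.
rewrite /Hfun /Defs.eta.
by case: (boolP (subw u t)) => [|/binom_eq0 ->]; rewrite ?mul0r.
Qed.

Lemma conv_Hfun_Hpow l u v : conv (@Hfun A) (Hpow l) u v = Hpow l.+1 u v.
Proof.
rewrite conv_unguarded => [|t /binom_eq0|t /binom_eq0]; last 2 first.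
- by rewrite /Hfun => ->; rewrite !mul0r.
- by rewrite /Hpow => ->; rewrite mulr0 mul0r.
have summandE k (t : k.-tuple A) : @Hfun A u t * Hpow l t v =
    ((k == (size u).+1) * (l`! * (size v == k + l)))%N%:R
    * (binom t u * binom v t)%N%:R.
  by rewrite HfunE /Hpow size_tuple !natrM; ring.
under eq_bigr => k _ do rewrite (eq_bigr _ (fun t _ => summandE k t)) -mulr_sumr -natr_sum.
under eq_bigr => k _ do rewrite -natrM -mulnA mulnbl.
rewrite -natr_sum -big_mkcond /=.
rewrite (big_ord1_eq _ (fun k =>
  l`! * (size v == k + l) * \sum_(t : k.-tuple A) binom t u * binom v t)%N).
rewrite ltnS /Hpow -!natrM; congr _%:R.
rewrite addSn -addnS; case: eqP => [eq_v | _]; last by rewrite !muln0 if_same.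
rewrite eq_v addnS ltnS leq_addr factS; have := sum_binom_cover u v; rewrite eq_v; nia.
Qed.

End Powers.

Theorem mainTheorem1 (A : finType) (u v : seq A) (l : nat) :
  incpow (@Hfun A) l u v
  = (l`!)%:R * (binom v u)%:R * (size v == (size u + l)%N)%:R.
Proof.
elim: l u v => [|l IHl] u v; first exact/esym/Hpow0.
rewrite /incpow iterS -/(incpow _ l) -[RHS]/(@Hpow A l.+1 u v) -conv_Hfun_Hpow.
by apply: eq_bigr => k _; apply: eq_bigr => t _; rewrite IHl.
Qed.
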